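(* Let $H\subseteq\mathbb N$ be a numerical semigroup, $k$ an infinite field, $R=k[[H]]\subseteq k[[t]]$. Write $H=\{a_0=0<a_1<a_2<\cdots\}$, let $n$ be the smallest integer with $a_{n+i}=a_n+i$ for all $i\ge 0$, and assume $n=4$. Then the following are equivalent: (1) $\mathcal T(R)$ is finite; (2) $\mathcal T(R)=\mathcal I(R)$; (3) $a_2-a_1\ge a_4-a_3$.
   Context: $v$ is the $t$-adic order; $I_i=\{r\in R\mid v(r)\ge a_i\}$ for $0\le i\le n$ and $\mathcal I(R)=\{I_0,\dots,I_n\}$. $\mathcal T(R)$ is the set of nonzero trace ideals of $R$, where a trace ideal is one of the form $\sum_{f\in\mathrm{Hom}_R(M,R)}\mathrm{Im}f$ for some $R$-module $M$. *)

From HB Require Import structures.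
From mathcomp Require Import all_boot all_order all_algebra.
Set Implicit Arguments. Unset Strict Implicit. Unset Printing Implicit Defensive.
Import Order.TTheory GRing.Theory.
Local Open Scope ring_scope.

Definition numerical_semigroup (H : pred nat) : Prop :=
  [/\ H 0%N, (forall x y, H x -> H y -> H (x + y)%N) &
      exists N : nat, forall m, (N <= m)%N -> H m].

Definition enumerates (H : pred nat) (a : nat -> nat) : Prop :=
  (forall i, (a i < a i.+1)%N) /\ (forall x, H x <-> exists i, a i = x).

Definition stable_from (a : nat -> nat) (m : nat) : Prop :=
  forall i, a (m + i)%N = (a m + i)%N.
Definition conductor_index (a : nat -> nat) (n : nat) : Prop :=
  stable_from a n /\ forall m, stable_from a m -> (n <= m)%N.

Definition infinite_field (k : fieldType) : Prop :=
  forall s : seq k, exists x : k, x \notin s.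

Definition ps (k : fieldType) := nat -> k.
Definition psadd (k : fieldType) (f g : ps k) : ps k := fun n => f n + g n.
Definition psmul (k : fieldType) (f g : ps k) : ps k :=
  fun n => \sum_(i < n.+1) f i * g (n - i)%N.
Definition ps1 (k : fieldType) : ps k := fun n => if n == 0%N then 1 else 0.

(* R = k[[H]]: power series supported on H. *)
Definition inR (k : fieldType) (H : pred nat) (f : ps k) : Prop :=
  forall n, f n != 0 -> H n.

Definition is_module (k : fieldType) (H : pred nat) (M : zmodType)
  (act : ps k -> M -> M) : Prop :=
  [/\ forall r x y, inR H r -> act r (x + y) = act r x + act r y,
      forall r s x, inR H r -> inR H s -> act (psadd r s) x = act r x + act s x,
      forall r s x, inR H r -> inR H s -> act (psmul r s) x = act r (act s x) &
      forall x, act (ps1 k) x = x].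

Definition is_hom (k : fieldType) (H : pred nat) (M : zmodType)
  (act : ps k -> M -> M) (f : M -> ps k) : Prop :=
  [/\ forall x, inR H (f x),
      forall x y n, f (x + y) n = f x n + f y n &
      forall r x n, inR H r -> f (act r x) n = psmul r (f x) n].

Definition in_trace (k : fieldType) (H : pred nat) (M : zmodType)
  (act : ps k -> M -> M) (z : ps k) : Prop :=
  exists s : seq ((M -> ps k) * M),
    (forall j, (j < size s)%N -> is_hom H act (nth (fun _ _ => 0, 0) s j).1) /\
    forall n, z n = \sum_(p <- s) p.1 p.2 n.

(* Ideals of R are represented as predicates on k[[t]], compared extensionally. *)
Definition same_ideal (k : fieldType) (I J : ps k -> Prop) : Prop :=
  forall z, I z <-> J z.

Definition is_trace_ideal (k : fieldType) (H : pred nat) (I : ps k -> Prop) : Prop :=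
  exists (M : zmodType) (act : ps k -> M -> M),
    is_module H act /\ forall z, I z <-> in_trace H act z.

Definition nonzero_ideal (k : fieldType) (I : ps k -> Prop) : Prop :=
  exists z, I z /\ exists n, z n != 0.

Definition in_T (k : fieldType) (H : pred nat) (I : ps k -> Prop) : Prop :=
  is_trace_ideal H I /\ nonzero_ideal I.

Definition I_ideal (k : fieldType) (H : pred nat) (a : nat -> nat) (i : nat) : ps k -> Prop :=
  fun r => inR H r /\ forall m, (m < a i)%N -> r m = 0.

Definition T_finite (k : fieldType) (H : pred nat) : Prop :=
  exists (N : nat) (J : nat -> ps k -> Prop),
    forall I : ps k -> Prop, in_T H I -> exists j, (j < N)%N /\ same_ideal I (J j).

Definition T_eq_I (k : fieldType) (H : pred nat) (a : nat -> nat) (n : nat) : Prop :=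
  (forall I : ps k -> Prop, in_T H I -> exists i, (i <= n)%N /\ same_ideal I (I_ideal H a i)) /\
  (forall i, (i <= n)%N -> in_T H (@I_ideal k H a i)).

From HB Require Import structures.
From mathcomp Require Import all_boot all_order all_algebra.
From mathcomp.classical Require Import boolp.
From mathcomp Require Import zify ring.
Set Implicit Arguments. Unset Strict Implicit. Unset Printing Implicit Defensive.
Import Order.TTheory GRing.Theory.
Local Open Scope ring_scope.

(* Trace ideals are characterized by stability: the trace [T] of any module satisfies [q T <= T]
   for every fractional multiplier [q] with [q T <= R], and conversely an ideal containing the
   conductor and stable in this sense is the trace of itself, because all its homomorphisms to [R]
   are multiplications.
   If [a_2 - a_1 >= a_4 - a_3] and [a_i] is the least order in a nonzero trace ideal [T], such
   multipliers (monomials, [t^-p y] for [y] of least order, and [t^D / (1 + al t^D)]) produce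
   elements of [T] of every exact order [a_j], [i <= j < 4], and the conductor; hence [T = I_i].
   If [a_2 - a_1 < a_4 - a_3], the ideals [{z | z_0 = 0, z_(a_2) = l z_(a_1)}], [l] in the infinite
   field [k], are pairwise distinct trace ideals. *)

Section PowerSeries.
Variable k : fieldType.
Implicit Types (f g h : ps k) (m n : nat).

Definition ps0 : ps k := fun=> 0.
Definition psopp f : ps k := fun n => - f n.
Definition psscale (x : k) f : ps k := fun n => x * f n.
Definition psX m : ps k := fun n => if n == m then 1 else 0.
Definition psshift m f : ps k := fun n => if (m <= n)%N then f (n - m)%N else 0.
Definition psdown m f : ps k := fun n => f (n + m)%N.
Definition ps_binom (al : k) D : ps k := psadd (ps1 k) (psscale al (psX D)).
Definition order_ge m f := forall n, (n < m)%N -> f n = 0.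
Definition exact_order m f := order_ge m f /\ f m != 0.

Lemma ps_binom0 al D : (0 < D)%N -> ps_binom al D 0%N = 1.
Proof.
by move=> D0; rewrite /ps_binom /psadd /psscale /ps1 /psX eqxx eq_sym gtn_eqF // mulr0 addr0.
Qed.

Definition ps_trunc n f : {poly k} := \poly_(i < n.+1) f i.

Lemma ps_trunc_coef n f i : (i <= n)%N -> (ps_trunc n f)`_i = f i.
Proof. by move=> hi; rewrite coef_poly ltnS hi. Qed.

Lemma psmul_coef_poly f g (p q : {poly k}) n :
  (forall i, (i <= n)%N -> p`_i = f i) -> (forall i, (i <= n)%N -> q`_i = g i) ->
  psmul f g n = (p * q)`_n.
Proof.
move=> Hp Hq; rewrite /psmul coefM; apply: eq_bigr => i _.
by rewrite Hp ?Hq // ?leq_subr // -ltnS.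
Qed.

Lemma psmul_truncE f g n : psmul f g n = (ps_trunc n f * ps_trunc n g)`_n.
Proof. by apply: psmul_coef_poly => i hi; rewrite ps_trunc_coef. Qed.

Lemma psmulC f g : psmul f g = psmul g f.
Proof. by apply: funext => n; rewrite !psmul_truncE mulrC. Qed.

Lemma psmul_trunc_coef f g n i :
  (i <= n)%N -> (ps_trunc n f * ps_trunc n g)`_i = psmul f g i.
Proof.
move=> hi; symmetry.
by apply: psmul_coef_poly => j hj; rewrite ps_trunc_coef // (leq_trans hj hi).
Qed.

Lemma psmulA f g h : psmul f (psmul g h) = psmul (psmul f g) h.
Proof.
apply: funext => n; rewrite (@psmul_coef_poly _ _ (ps_trunc n f)
  (ps_trunc n g * ps_trunc n h)) => [|i hi|i hi]; last 2 first.
- by rewrite ps_trunc_coef.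
- exact: psmul_trunc_coef.
rewrite mulrA; symmetry; apply: psmul_coef_poly => i hi; last first.
  by rewrite ps_trunc_coef.
exact: psmul_trunc_coef.
Qed.

Lemma ps_truncD n f g : ps_trunc n (psadd f g) = ps_trunc n f + ps_trunc n g.
Proof. by apply/polyP => i; rewrite coefD !coef_poly; case: ifP; rewrite ?addr0. Qed.

Lemma psmulDr f g h : psmul f (psadd g h) = psadd (psmul f g) (psmul f h).
Proof.
by apply: funext => n; rewrite [in RHS]/psadd !psmul_truncE ps_truncD mulrDr coefD.
Qed.

Lemma psmulDl f g h : psmul (psadd g h) f = psadd (psmul g f) (psmul h f).
Proof. by rewrite psmulC psmulDr !(psmulC f). Qed.

Lemma psmulZr x f g : psmul f (psscale x g) = psscale x (psmul f g).
Proof.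
apply: funext => n; rewrite /psscale /psmul mulr_sumr.
by apply: eq_bigr => i _; rewrite mulrCA.
Qed.

Lemma psmulZl x f g : psmul (psscale x g) f = psscale x (psmul g f).
Proof. by rewrite psmulC psmulZr psmulC. Qed.

Lemma psmul1l f : psmul (ps1 k) f = f.
Proof.
apply: funext => n; rewrite /psmul big_ord_recl /ps1 /= mul1r subn0.
by rewrite big1 ?addr0 // => i _; rewrite mul0r.
Qed.

Lemma psmul_shiftl m f g : psmul (psshift m f) g = psshift m (psmul f g).
Proof.
apply: funext => n.
rewrite (@psmul_coef_poly _ _ ('X^m * ps_trunc n f) (ps_trunc n g)); last 2 first.
- move=> i hi; rewrite coefXnM /psshift; case: ltnP => hm //.
  by rewrite ps_trunc_coef // (leq_trans (leq_subr _ _) hi).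
- by move=> i hi; rewrite ps_trunc_coef.
rewrite -mulrA coefXnM /psshift; case: ltnP => hm //.
by rewrite psmul_trunc_coef ?leq_subr.
Qed.

Lemma psmul_shiftr m f g : psmul g (psshift m f) = psshift m (psmul g f).
Proof. by rewrite psmulC psmul_shiftl psmulC. Qed.

Lemma psX_shift m : psX m = psshift m (ps1 k).
Proof.
apply: funext => n; rewrite /psX /psshift /ps1 subn_eq0 eqn_leq.
by case: (m <= n)%N; rewrite ?andbT ?andbF.
Qed.

Lemma psmul_X m f : psmul (psX m) f = psshift m f.
Proof. by rewrite psX_shift psmul_shiftl psmul1l. Qed.

Lemma psshift_coef m f n : psshift m f (m + n)%N = f n.
Proof. by rewrite /psshift leq_addr addKn. Qed.

Lemma psshift_order m f : order_ge m (psshift m f).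
Proof. by move=> n hn; rewrite /psshift leqNgt hn. Qed.

Lemma psdown_shift m f : psdown m (psshift m f) = f.
Proof. by apply: funext => n; rewrite /psdown addnC psshift_coef. Qed.

Lemma psshift_down m f : order_ge m f -> psshift m (psdown m f) = f.
Proof.
move=> hf; apply: funext => n; rewrite /psdown /psshift.
by case: leqP => h; [rewrite subnK | rewrite hf].
Qed.

Lemma psdown0 f : psdown 0 f = f.
Proof. by apply: funext => n; rewrite /psdown addn0. Qed.

Lemma psshift_shift m p f : psshift m (psshift p f) = psshift (m + p) f.
Proof.
apply: funext => n; rewrite /psshift subnDA.
case: (leqP m n) => h1; case: (leqP (m + p) n) => h2; case: (leqP p (n - m)) => h3 //;
  exfalso; lia.
Qed.

Lemma psmul_order al be f g :
  order_ge al f -> order_ge be g -> order_ge (al + be) (psmul f g).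
Proof.
move=> hf hg n hn; rewrite /psmul big1 // => i _.
case: (ltnP i al) => hi; first by rewrite hf ?mul0r.
by rewrite hg ?mulr0 //; have := ltn_ord i; lia.
Qed.

Lemma order_ge_psmulr m q f : order_ge m f -> order_ge m (psmul q f).
Proof. exact: (@psmul_order 0). Qed.

Lemma psmul_coef1 f g n i1 : (i1 <= n)%N ->
  (forall i, (i <= n)%N -> i != i1 -> f i * g (n - i)%N = 0) ->
  psmul f g n = f i1 * g (n - i1)%N.
Proof.
move=> h1 hz; rewrite /psmul (bigD1 (Ordinal (h1 : (i1 < n.+1)%N))) //= big1 ?addr0 //.
by move=> i hi; apply: hz; [rewrite -ltnS | exact: hi].
Qed.

Lemma psmul_coef2 f g n i1 i2 : (i1 < i2)%N -> (i2 <= n)%N ->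
  (forall i, (i <= n)%N -> i != i1 -> i != i2 -> f i * g (n - i)%N = 0) ->
  psmul f g n = f i1 * g (n - i1)%N + f i2 * g (n - i2)%N.
Proof.
move=> h12 h2 hz; have h1 : (i1 < n.+1)%N by lia.
rewrite /psmul (bigD1 (Ordinal h1)) //= (bigD1 (Ordinal (h2 : (i2 < n.+1)%N))) /=.
  rewrite big1 ?addr0 // => i /andP [hi1 hi2].
  by apply: hz; [rewrite -ltnS | exact: hi1 | exact: hi2].
by apply/eqP => -[e]; move: h12; rewrite e ltnn.
Qed.

Lemma psmul_sum (T : Type) g (s : seq T) (F : T -> ps k) :
  psmul g (fun n => \sum_(p <- s) F p n) = fun n => \sum_(p <- s) psmul g (F p) n.
Proof.
apply: funext => n; rewrite /psmul.
under eq_bigr => i _ do rewrite mulr_sumr.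
by rewrite exchange_big.
Qed.

Section Division.
Variables u w : ps k.

Fixpoint psdiv_trunc n : nat -> k :=
  if n is n'.+1 then
    fun j => if (j <= n')%N then psdiv_trunc n' j
             else (w n'.+1 - \sum_(i < n'.+1) u i.+1 * psdiv_trunc n' (n' - i)%N) / u 0%N
  else fun=> w 0%N / u 0%N.

Definition psdiv : ps k := fun j => psdiv_trunc j j.

Lemma psdiv_truncE n j : (j <= n)%N -> psdiv_trunc n j = psdiv j.
Proof.
elim: n j => [|n IH] j hj; first by move: hj; rewrite leqn0 => /eqP ->.
rewrite /=; case: leqP => h; first exact: IH.
have -> : j = n.+1 by lia.
by rewrite /psdiv /= ltnn.
Qed.

Lemma psdivK : u 0%N != 0 -> psmul u psdiv = w.
Proof.
move=> hu; apply: funext => n; rewrite /psmul.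
case: n => [|n]; first by rewrite big_ord1 /psdiv /= mulrC divfK.
rewrite big_ord_recl subn0 {1}/psdiv /= ltnn mulrC divfK //.
rewrite [X in _ - X](eq_bigr (fun i : 'I_n.+1 => u (bump 0 i) * psdiv (n.+1 - bump 0 i)%N));
  first by rewrite subrK.
by move=> i _; rewrite psdiv_truncE ?leq_subr.
Qed.
End Division.

(* Multiplying by [t^D / u] turns [c t^m u] into the monomial [c t^(m + D)], and leaves the
   coefficients below [D + m'] unaffected by terms of order at least [m']. *)
Lemma psmul_shift_div_coef (u : ps k) c m m' D x i :
  u 0%N != 0 -> order_ge m' (psadd x (psopp (psscale c (psshift m u)))) -> (i < D + m')%N ->
  psmul (psshift D (psdiv u (ps1 k))) x i = psscale c (psX (m + D)) i.
Proof.
move=> hu hr hi; set g := psshift D _; set r := psadd x _ in hr.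
have -> : x = psadd (psscale c (psshift m u)) r.
  by apply: funext => n; rewrite /r /psadd /psopp addrC subrK.
rewrite psmulDr /psadd (psmul_order (@psshift_order D _) hr) // addr0.
rewrite psmulZr psmul_shiftr /g psmul_shiftl psmulC psdivK //.
by rewrite psshift_shift -psX_shift addnC.
Qed.
End PowerSeries.

Section SemigroupRing.
Variables (k : fieldType) (H : pred nat).
Hypothesis HH : numerical_semigroup H.
Implicit Types r s x : ps k.

Lemma inR_psmul r s : inR H r -> inR H s -> inR H (psmul r s).
Proof.
case: HH => _ Hadd _ hr hs n; rewrite /psmul => hn.
have [i] : exists i : 'I_n.+1, r i * s (n - i)%N != 0.
  apply/existsP; apply: contraNT hn; rewrite negb_exists => /forallP hall.
  by apply/eqP; rewrite big1 // => i _; apply/eqP; move: (hall i); rewrite negbK.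
rewrite mulf_eq0 negb_or => /andP [/hr h1 /hs h2].
by have := Hadd _ _ h1 h2; rewrite subnKC // -ltnS.
Qed.

Lemma inR_psadd r s : inR H r -> inR H s -> inR H (psadd r s).
Proof.
move=> hr hs n; rewrite /psadd; case: (eqVneq (r n) 0) => [->|/hr //].
by rewrite add0r => /hs.
Qed.

Lemma inR_psscale b r : inR H r -> inR H (psscale b r).
Proof. by move=> hr n; rewrite /psscale mulf_eq0 negb_or => /andP [_ /hr]. Qed.

Lemma inR_psopp r : inR H r -> inR H (psopp r).
Proof. by move=> hr n; rewrite /psopp oppr_eq0 => /hr. Qed.

Lemma inR_ps0 : inR H (ps0 k).
Proof. by move=> n; rewrite eqxx. Qed.

Lemma inR_psX m : H m -> inR H (psX k m).
Proof. by move=> hm n; rewrite /psX; case: (eqVneq n m) => [-> _ | _]; rewrite ?eqxx. Qed.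

Lemma inR_ps1 : inR H (ps1 k).
Proof. by case: HH => H0 _ _; exact: (@inR_psX 0 H0). Qed.

(* Restriction to the support [H]; it makes the action of [R] on an ideal total. *)
Definition projR r : ps k := fun n => if H n then r n else 0.

Lemma inR_projR r : inR H (projR r).
Proof. by move=> n; rewrite /projR; case: (H n); rewrite ?eqxx. Qed.

Lemma projR_id r : inR H r -> projR r = r.
Proof.
move=> hr; apply: funext => n; rewrite /projR.
by case hn: (H n) => //; apply/esym/eqP; exact: contraFT (hr n) hn.
Qed.
End SemigroupRing.

Section Trace.
Variables (k : fieldType) (H : pred nat) (M : zmodType) (act : ps k -> M -> M).
Hypothesis HH : numerical_semigroup H.
Local Notation T := (in_trace H act).

Lemma in_trace_hom f x : is_hom H act f -> T (f x).
Proof. by move=> hf; exists [:: (f, x)]; split=> [[]|n] //; rewrite big_seq1. Qed.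

Lemma in_trace_inR z : T z -> inR H z.
Proof.
case=> s [hs hz] n; rewrite hz => hn.
have [j] : exists j : 'I_(size s),
    (nth (fun _ _ => 0, 0) s j).1 (nth (fun _ _ => 0, 0) s j).2 n != 0.
  apply/existsP; apply: contraNT hn; rewrite negb_exists => /forallP hall.
  rewrite (big_nth (fun _ _ => 0, 0)) big_mkord; apply/eqP; rewrite big1 // => i _.
  by apply/eqP; move: (hall i); rewrite negbK.
by case: (hs j (ltn_ord j)) => hR _ _; apply: hR.
Qed.

Lemma in_trace_add z1 z2 : T z1 -> T z2 -> T (psadd z1 z2).
Proof.
case=> s1 [hs1 hz1] [s2 [hs2 hz2]]; exists (s1 ++ s2); split.
  move=> j; rewrite size_cat nth_cat => hj; case: ltnP => hj2; first exact: hs1.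
  by apply: hs2; rewrite ltn_subLR.
by move=> n; rewrite /psadd big_cat hz1 hz2.
Qed.

(* A trace ideal [T] is stable under every fractional multiplier [t^-s g] mapping [T] into [R]:
   composing a homomorphism to [R] with it gives again a homomorphism to [R]. *)
Lemma in_trace_mul_down g s :
  (forall x, T x -> order_ge s (psmul g x) /\ inR H (psdown s (psmul g x))) ->
  forall z, T z -> T (psdown s (psmul g z)).
Proof.
move=> hg z [l [hl hz]].
pose F (p : (M -> ps k) * M) := (fun x => psdown s (psmul g (p.1 x)), p.2).
exists (map F l); split=> [j|n]; last first.
  by rewrite (funext hz) psmul_sum /psdown big_map.
rewrite size_map => hj; rewrite (nth_map (fun _ _ => 0, 0)) //=.
move: (hl j hj); set f := (nth _ l j).1 => hf; have [fR fD fM] := hf.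
have hgf x := hg _ (in_trace_hom x hf).
split=> [x | x y n | r x n hr]; first exact: (hgf x).2.
  have -> : f (x + y) = psadd (f x) (f y) by apply: funext => m; rewrite fD.
  by rewrite psmulDr.
have -> : f (act r x) = psmul r (f x) by apply: funext => m; rewrite fM.
rewrite psmulA (psmulC g) -psmulA -(psshift_down (hgf x).1).
by rewrite psmul_shiftr !psdown_shift.
Qed.

Lemma in_trace_mul g z :
  (forall x, T x -> inR H (psmul g x)) -> T z -> T (psmul g z).
Proof.
move=> hg; rewrite -[psmul g z]psdown0; apply: in_trace_mul_down => x /hg.
by rewrite psdown0.
Qed.

Lemma in_trace_mulR r z : inR H r -> T z -> T (psmul r z).
Proof. by move=> hr; apply: in_trace_mul => x /in_trace_inR; apply: inR_psmul. Qed.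

Lemma in_trace_scale b z : T z -> T (psscale b z).
Proof.
move=> hz; rewrite -[z]psmul1l -psmulZl.
by apply: in_trace_mulR => //; apply/inR_psscale/inR_ps1.
Qed.

Lemma in_trace_shift m z : H m -> T z -> T (psshift m z).
Proof. by move=> hm; rewrite -psmul_X; apply/in_trace_mulR/inR_psX. Qed.
End Trace.

Record ideal (k : fieldType) (H : pred nat) := Ideal {
  ideal_mem :> ps k -> Prop;
  ideal0 : ideal_mem (ps0 k);
  idealD : forall x y, ideal_mem x -> ideal_mem y -> ideal_mem (psadd x y);
  idealN : forall x, ideal_mem x -> ideal_mem (psopp x);
  idealM : forall r x, inR H r -> ideal_mem x -> ideal_mem (psmul r x);
  ideal_inR : forall x, ideal_mem x -> inR H x }.

Record ideal_elt (k : fieldType) (H : pred nat) (I : ideal k H) :=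
  IdealElt { ideal_val : ps k; ideal_valP : I ideal_val }.

Section IdealModule.
Variables (k : fieldType) (H : pred nat) (I : ideal k H).
Hypothesis HH : numerical_semigroup H.

Lemma ideal_val_inj : injective (@ideal_val k H I).
Proof.
by case=> x hx [y hy] /= exy; subst y; rewrite (Prop_irrelevance hx hy).
Qed.

HB.instance Definition _ := gen_eqMixin (ideal_elt I).
HB.instance Definition _ := gen_choiceMixin (ideal_elt I).

Definition ideal_elt0 : ideal_elt I := IdealElt (ideal0 I).
Definition ideal_eltN (x : ideal_elt I) := IdealElt (idealN (ideal_valP x)).
Definition ideal_eltD (x y : ideal_elt I) :=
  IdealElt (idealD (ideal_valP x) (ideal_valP y)).

Lemma ideal_eltDA : associative ideal_eltD.
Proof. by move=> x y z; apply/ideal_val_inj/funext => n; rewrite /= /psadd addrA. Qed.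

Lemma ideal_eltDC : commutative ideal_eltD.
Proof. by move=> x y; apply/ideal_val_inj/funext => n; rewrite /= /psadd addrC. Qed.

Lemma ideal_elt0D : left_id ideal_elt0 ideal_eltD.
Proof. by move=> x; apply/ideal_val_inj/funext => n; rewrite /= /psadd add0r. Qed.

Lemma ideal_eltND : left_inverse ideal_elt0 ideal_eltN ideal_eltD.
Proof. by move=> x; apply/ideal_val_inj/funext => n; rewrite /= /psadd addNr. Qed.

HB.instance Definition _ :=
  GRing.isZmodule.Build (ideal_elt I) ideal_eltDA ideal_eltDC ideal_elt0D ideal_eltND.

Definition ideal_act (r : ps k) (x : ideal_elt I) : ideal_elt I :=
  IdealElt (idealM (@inR_projR k H r) (ideal_valP x)).

Lemma ideal_module : is_module H ideal_act.
Proof.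
split=> [r x y hr | r s x hr hs | r s x hr hs | x]; apply: ideal_val_inj => /=.
- exact: psmulDr.
- by rewrite !projR_id ?psmulDl //; apply: inR_psadd.
- by rewrite !projR_id ?psmulA //; apply: inR_psmul.
- by rewrite projR_id ?psmul1l //; apply: inR_ps1.
Qed.

Lemma ideal_val_hom : is_hom H ideal_act (@ideal_val k H I).
Proof. by split=> [x | // | r x n hr]; [apply: ideal_inR (ideal_valP x) | rewrite /= projR_id]. Qed.
End IdealModule.
Arguments ideal_act {k H} I r x.

Section IdealTrace.
Variables (k : fieldType) (H : pred nat) (I : ideal k H).
Hypothesis HH : numerical_semigroup H.
Variable c : nat.
Hypothesis c1_gap : ~~ H c.-1.
Hypothesis conductor_sub : forall m, (c <= m)%N -> I (psX k m).

Definition multiplier_stable :=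
  forall q, (forall x, I x -> inR H (psmul q x)) -> forall x, I x -> I (psmul q x).

(* [f] is determined by [F := f t^c], through [t^c f x = x F]; [F] has no coefficient below [c],
   otherwise some [f t^m] would have a nonzero coefficient at the gap [c - 1]. *)
Lemma hom_ideal_mul (f : ideal_elt I -> ps k) : is_hom H (ideal_act I) f ->
  exists q, forall x, f x = psmul q (ideal_val x).
Proof.
case=> fR _ fM; pose u := IdealElt (conductor_sub (leqnn c)); pose F := f u.
have uR : inR H (psX k c) by apply: ideal_inR (conductor_sub (leqnn c)).
have key x : psshift c (f x) = psmul (ideal_val x) F.
  have xR : inR H (ideal_val x) by apply: ideal_inR (ideal_valP x).
  have e : ideal_act I (ideal_val x) u = ideal_act I (psX k c) x.
    by apply: ideal_val_inj; rewrite /= !projR_id // psmulC.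
  by apply: funext => n; rewrite -psmul_X -fM // -e fM.
have F0 : order_ge c F.
  move=> n hn; apply/eqP; apply: contraT => hF.
  case: (ex_minnP (ex_intro (fun n => F n != 0) n hF)) => w hw wmin.
  have hwc : (w < c)%N by apply: leq_ltn_trans (wmin _ hF) hn.
  have hm : (c <= c + c.-1 - w)%N by lia.
  have := congr1 (fun g => g (c + c.-1)%N) (key (IdealElt (conductor_sub hm))).
  rewrite /= psshift_coef psmul_X /psshift ifT; last by lia.
  rewrite (_ : (c + c.-1 - (c + c.-1 - w) = w)%N); last by lia.
  by move=> e; move: (fR (IdealElt (conductor_sub hm)) c.-1); rewrite e (negbTE c1_gap) => /(_ hw).
exists (psdown c F) => x.
by rewrite psmulC -[f x](psdown_shift c) key -{1}(psshift_down F0) psmul_shiftr psdown_shift.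
Qed.

Lemma in_trace_ideal z : multiplier_stable -> in_trace H (ideal_act I) z -> I z.
Proof.
move=> stable [s [hs hz]]; rewrite (funext hz) {z hz}.
elim: s hs => [|p s IH] hs.
  rewrite [X in I X](_ : _ = ps0 k); first exact: ideal0.
  by apply: funext => n; rewrite big_nil.
rewrite [X in I X](_ : _ = psadd (p.1 p.2) (fun n => \sum_(p0 <- s) p0.1 p0.2 n)).
  2: by apply: funext => n; rewrite big_cons.
apply: idealD; last by apply: IH => j; apply: (hs j.+1).
have hp := hs 0%N isT; have [fR _ _] := hp.
have [q hq] := hom_ideal_mul hp.
rewrite hq; apply: stable (ideal_valP _) => x hx.
by have := fR (IdealElt hx); rewrite hq.
Qed.

Lemma in_T_ideal : multiplier_stable -> in_T H I.
Proof.
move=> stable; split.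
  exists (ideal_elt I), (ideal_act I); split; first exact: ideal_module.
  move=> z; split=> [hz | ]; last exact: in_trace_ideal.
  exact: (in_trace_hom (IdealElt hz) (ideal_val_hom _)).
exists (psX k c); split; first exact: conductor_sub.
by exists c; rewrite /psX eqxx oner_eq0.
Qed.
End IdealTrace.

Section Enumeration.
Variables (H : pred nat) (a : nat -> nat).
Hypothesis HH : numerical_semigroup H.
Hypothesis Ha : enumerates H a.

Lemma enum_leq : {mono a : i j / (i <= j)%N}.
Proof. exact: le_mono (homo_ltn ltn_trans Ha.1). Qed.

Lemma enum_ltn : {mono a : i j / (i < j)%N}.
Proof. exact: leqW_mono enum_leq. Qed.

Lemma mem_enum i : H (a i).
Proof. by apply/Ha.2; exists i. Qed.

Lemma enum0 : a 0 = 0%N.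
Proof.
case: HH => H0 _ _; have [i hi] := (Ha.2 0%N).1 H0.
by apply/eqP; rewrite -leqn0 -{2}hi enum_leq.
Qed.

Lemma enum_next i m : H m -> (a i < m)%N -> (a i.+1 <= m)%N.
Proof. by case/Ha.2 => j <-; rewrite enum_ltn enum_leq. Qed.

Lemma enum_gap i m : (a i < m)%N -> (m < a i.+1)%N -> ~~ H m.
Proof. by move=> h1 h2; apply/negP => /enum_next /(_ h1); rewrite leqNgt h2. Qed.

Lemma inR_gap (k : fieldType) (x : ps k) i m :
  inR H x -> (a i < m)%N -> (m < a i.+1)%N -> x m = 0.
Proof. by move=> hx h1 h2; apply/eqP; apply: contraNT (enum_gap h1 h2); apply: hx. Qed.

Lemma order_ge_sub_binom (k : fieldType) (x : ps k) (al : k) p :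
  inR H x -> order_ge (a p) x -> x (a p.+1) = al * x (a p) ->
  order_ge (a p.+2)
    (psadd x (psopp (psscale (x (a p)) (psshift (a p) (ps_binom al (a p.+1 - a p)))))).
Proof.
move=> xR low rel i hi; set D := (a p.+1 - a p)%N.
have apq : (a p < a p.+1)%N by rewrite enum_ltn.
have nD0 : (0 == D)%N = false by rewrite eq_sym gtn_eqF // subn_gt0.
rewrite /psadd /psopp /psscale /psshift; case: (ltnP i (a p)) => h1.
  by rewrite low // mulr0 oppr0 addr0.
rewrite /ps_binom /psadd /psscale /ps1 /psX; case: (ltngtP i (a p.+1)) => h2.
- have [->|h3] := eqVneq i (a p); first by rewrite subnn nD0 mulr0 addr0 mulr1 subrr.
  have h1' : (a p < i)%N by rewrite ltn_neqAle eq_sym h3.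
  by rewrite (inR_gap xR h1' h2) !ifF ?mulr0 ?addr0 ?mulr0 ?subrr //; lia.
- by rewrite (inR_gap xR h2 hi) !ifF ?mulr0 ?addr0 ?mulr0 ?subrr //; lia.
- by rewrite h2 -/D eqxx eq_sym nD0 add0r mulr1 rel mulrC subrr.
Qed.

Variable n : nat.
Hypothesis Hn : conductor_index a n.

Lemma mem_conductor m : (a n <= m)%N -> H m.
Proof. by case: Hn => st _ hm; rewrite -(subnKC hm) -st; apply: mem_enum. Qed.
End Enumeration.

Lemma conductor_jump (H : pred nat) (a : nat -> nat) n :
  enumerates H a -> conductor_index a n.+1 -> ((a n).+1 < a n.+1)%N.
Proof.
move=> [inc _] [st nmin]; rewrite ltn_neqAle inc andbT; apply/eqP => e.
have : stable_from a n by case=> [|i]; rewrite ?addn0 // -addSnnS st -e addSnnS.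
by move/nmin; rewrite ltnn.
Qed.

Section ValuationIdeals.
Variables (k : fieldType) (H : pred nat) (a : nat -> nat).
Hypothesis HH : numerical_semigroup H.
Hypothesis Ha : enumerates H a.

Definition valuation_ideal (j : nat) : ideal k H.
Proof.
refine (@Ideal k H (I_ideal H a j) _ _ _ _ _).
- by split=> [|m _]; [apply: inR_ps0 | rewrite /ps0].
- move=> x y [hx x0] [hy y0]; split=> [|m hm]; first exact: inR_psadd.
  by rewrite /psadd x0 ?y0 ?addr0.
- move=> x [hx x0]; split=> [|m hm]; first exact: inR_psopp.
  by rewrite /psopp x0 ?oppr0.
- move=> r x hr [hx x0]; split; [exact: inR_psmul | exact: order_ge_psmulr].
- by move=> x [].
Defined.

Lemma I_ideal_in_T n j : conductor_index a n.+1 -> (j <= n.+1)%N ->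
  in_T H (@I_ideal k H a j).
Proof.
move=> Hn hj; apply: (@in_T_ideal k H (valuation_ideal j) HH (a n.+1)).
- by apply: (enum_gap Ha (i := n)); have := conductor_jump Ha Hn; lia.
- move=> m hm; split; first by apply/inR_psX/(mem_conductor Ha Hn).
  move=> i hi; rewrite /psX ifF //; apply/negP => /eqP e.
  by move: hj; rewrite -(enum_leq Ha); lia.
- by move=> q hq x [hx x0]; split; [apply: hq | apply: order_ge_psmulr].
Qed.
End ValuationIdeals.

Section TraceIdeals.
Variables (k : fieldType) (H : pred nat) (a : nat -> nat) (M : zmodType).
Variable act : ps k -> M -> M.
Hypothesis HH : numerical_semigroup H.
Hypothesis Ha : enumerates H a.
Local Notation T := (in_trace H act).
Local Notation I := (@I_ideal k H a).

Lemma trace_min_order : (exists z, T z /\ exists n, z n != 0) ->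
  exists p y, [/\ T y, y p != 0 & forall x, T x -> order_ge p x].
Proof.
case=> z [hz [n hn]]; pose P m := `[< exists z, T z /\ z m != 0 >].
have exP : exists n, P n by exists n; apply/asboolP; exists z.
have [p /asboolP [y [hy yp]] pmin] := ex_minnP exP.
exists p, y; split=> // x hx m hm; apply/eqP; apply: contraT => xm.
have /pmin : P m by apply/asboolP; exists x.
by rewrite leqNgt hm.
Qed.

Lemma I_sub_trace_step j y : (forall w, I j.+1 w -> T w) -> T y -> exact_order (a j) y ->
  forall w, I j w -> T w.
Proof.
move=> hI hy [y0 yj] w [hw w0]; have yR := in_trace_inR hy.
pose b := w (a j) / y (a j).
have -> : w = psadd (psscale b y) (psadd w (psopp (psscale b y))).
  by apply: funext => n; rewrite /psadd /psopp addrC subrK.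
apply: in_trace_add; first exact: in_trace_scale.
apply: hI; split=> [|n hn]; first by apply/inR_psadd/inR_psopp/inR_psscale.
rewrite /psadd /psopp /psscale; case: (ltngtP n (a j)) => h.
- by rewrite w0 // y0 // mulr0 oppr0 addr0.
- by rewrite (inR_gap Ha hw h hn) (inR_gap Ha yR h hn) mulr0 oppr0 addr0.
- by rewrite h /b divfK // subrr.
Qed.

Variable n : nat.
Hypothesis Hn : conductor_index a n.

(* An element [y] of minimal order [p] is [t^p] times a unit of [k[[t]]], so [t^-p y] divides
   every element of the conductor. *)
Lemma conductor_sub_trace p y : T y -> y p != 0 -> (forall x, T x -> order_ge p x) ->
  forall w, I n w -> T w.
Proof.
move=> hy yp low w [hw w0].
pose g := psshift (a n) (psdiv (psdown p y) (psdown (a n) w)).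
have -> : w = psdown p (psmul g y).
  rewrite -(psshift_down (low _ hy)) psmul_shiftr psdown_shift psmul_shiftl psmulC.
  by rewrite psdivK ?psshift_down // /psdown add0n.
apply: in_trace_mul_down => // x hx.
have gx : order_ge (a n + p) (psmul g x) := psmul_order (@psshift_order k (a n) _) (low _ hx).
split=> [m hm | m]; first by apply: gx; lia.
rewrite /psdown; case: (ltnP m (a n)) => hm; last by move=> _; apply: (mem_conductor Ha Hn).
by rewrite gx ?eqxx // ltn_add2r.
Qed.

Lemma I_sub_trace_down j : (forall w, I n w -> T w) -> (j <= n)%N ->
  (forall i, (j <= i < n)%N -> exists2 z, T z & exact_order (a i) z) ->
  forall w, I j w -> T w.
Proof.
move=> hIn; move Hd : (n - j)%N => d; elim: d j Hd => [|d IH] j hd hj hz.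
  by have -> : j = n by lia.
have [z hzT hzo] : exists2 z, T z & exact_order (a j) z by apply: hz; lia.
apply: (I_sub_trace_step _ hzT hzo); apply: IH => [||i hi]; try lia.
by apply: hz; lia.
Qed.

Lemma trace_coef_proportional p y : ~ (exists2 z, T z & exact_order (a p.+1) z) ->
  (forall x, T x -> order_ge (a p) x) -> T y -> y (a p) != 0 ->
  forall z, T z -> z (a p.+1) = y (a p.+1) / y (a p) * z (a p).
Proof.
move=> hno low hy yp z hz; pose b := z (a p) / y (a p).
pose z' := psadd z (psscale (- b) y).
have z'0 : order_ge (a p.+1) z'.
  move=> m hm; rewrite /z' /psadd /psscale; case: (ltngtP m (a p)) => h.
  - by rewrite !low // mulr0 addr0.
  - by rewrite (inR_gap Ha (in_trace_inR hz) h hm) (inR_gap Ha (in_trace_inR hy) h hm) mulr0 addr0.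
  - by rewrite h /b mulNr divfK // subrr.
have : z' (a p.+1) = 0.
  apply/eqP; apply: contraT => z'n; case: hno; exists z' => //.
  by apply: in_trace_add => //; apply: in_trace_scale.
by rewrite /z' /psadd /psscale mulNr => /eqP; rewrite subr_eq0 => /eqP ->; rewrite /b; field.
Qed.

(* If no element of [T] had exact order [a_(p+1)], the multiplier [t^D / (1 + al t^D)],
   [D = a_(p+1) - a_p], would send [y] to one. *)
Lemma trace_next_order p y : (a n <= a p.+2 + (a p.+1 - a p))%N ->
  (forall x, T x -> order_ge (a p) x) -> T y -> y (a p) != 0 ->
  exists2 z, T z & exact_order (a p.+1) z.
Proof.
move=> hlen low hy yp; apply: contrapT => hno.
have rel := trace_coef_proportional hno low hy yp.
have apq : (a p < a p.+1)%N by rewrite (enum_ltn Ha).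
set D := (a p.+1 - a p)%N in hlen rel; have D0 : (0 < D)%N by rewrite subn_gt0.
pose g := psshift D (psdiv (ps_binom (y (a p.+1) / y (a p)) D) (ps1 k)).
have gx x : T x -> forall m, (m < D + a p.+2)%N ->
    psmul g x m = psscale (x (a p)) (psX k (a p.+1)) m.
  move=> hx m hm; rewrite -[a p.+1](subnKC (ltnW apq)) -/D.
  apply: (psmul_shift_div_coef (m' := a p.+2)) => //; first by rewrite ps_binom0 ?oner_eq0.
  exact: (order_ge_sub_binom Ha (in_trace_inR hx) (low _ hx) (rel _ hx)).
have gR x : T x -> inR H (psmul g x).
  move=> hx m; case: (ltnP m (a n)) => hm; last by move=> _; apply: (mem_conductor Ha Hn).
  rewrite gx ?(leq_trans hm) 1?addnC // /psscale /psX.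
  by case: (eqVneq m (a p.+1)) => [-> _|_]; [apply: (mem_enum Ha) | rewrite mulr0 eqxx].
have gy m : (m <= a p.+1)%N -> psmul g y m = psscale (y (a p)) (psX k (a p.+1)) m.
  by move=> hm; apply: gx => //; have := enum_ltn Ha p.+1 p.+2; lia.
apply: hno; exists (psmul g y); first exact: in_trace_mul.
split=> [m hm|]; rewrite gy ?(ltnW hm) // /psscale /psX; last by rewrite eqxx mulr1.
by rewrite ifN ?mulr0 // neq_ltn hm.
Qed.
End TraceIdeals.

Section Classification.
Variables (k : fieldType) (H : pred nat) (a : nat -> nat) (M : zmodType).
Variable act : ps k -> M -> M.
Hypothesis HH : numerical_semigroup H.
Hypothesis Ha : enumerates H a.
Hypothesis Hn : conductor_index a 4.
Hypothesis hcond : (a 4 - a 3 <= a 2 - a 1)%N.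
Local Notation T := (in_trace H act).
Local Notation I := (@I_ideal k H a).

Let a12 : (a 1 < a 2)%N. Proof. by rewrite (enum_ltn Ha). Qed.
Let a23 : (a 2 < a 3)%N. Proof. by rewrite (enum_ltn Ha). Qed.

(* [t^(a_3 - a_1)] maps [T] into [R]: it moves [a_1] to [a_3], and the orders [a_2, a_3] to at
   least [a_2 + a_3 - a_1 >= a_4]; this is where the hypothesis [a_4 - a_3 <= a_2 - a_1] is used. *)
Lemma trace_shift_a1_a3 y : (forall x, T x -> order_ge (a 1) x) -> T y ->
  exact_order (a 1) y -> exists2 z, T z & exact_order (a 3) z.
Proof.
move=> low hy [y0 y1]; set D := (a 3 - a 1)%N.
exists (psshift D y).
  rewrite -psmul_X; apply: in_trace_mul => // x hx m; rewrite psmul_X /psshift.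
  case: leqP => hm; last by rewrite eqxx.
  move=> xm; have xH := in_trace_inR hx xm.
  have : (a 1 <= m - D)%N by rewrite leqNgt; apply: contra xm => /(low _ hx) ->.
  rewrite leq_eqVlt => /orP [/eqP e | /(enum_next Ha xH) h2].
    by rewrite (_ : m = a 3); [apply: (mem_enum Ha) | lia].
  by apply: (mem_conductor Ha Hn); lia.
split=> [m hm | ]; last by rewrite -[a 3](subnK (ltnW (ltn_trans a12 a23))) psshift_coef.
by rewrite /psshift; case: leqP => h //; apply: y0; lia.
Qed.

Lemma trace_exact_orders i y : (i < 4)%N -> T y -> exact_order (a i) y ->
  (forall x, T x -> order_ge (a i) x) ->
  forall j, (i <= j < 4)%N -> exists2 z, T z & exact_order (a j) z.
Proof.
move=> hi4 hy [y0 yi] low j /andP [hij hj4].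
have [-> | neq] := eqVneq j i; first by exists y.
case: i hi4 y0 yi low hij neq => [|[|[|[|//]]]] _ y0 yi low hij neq.
- exists (psshift (a j) y); first by apply: in_trace_shift => //; apply: (mem_enum Ha).
  by split; [apply: psshift_order | rewrite -{2}[a j]addn0 psshift_coef -(enum0 HH Ha)].
- case: j hij hj4 neq => [|[|[|[|//]]]] // _ _ _.
    by apply: (trace_next_order HH Ha Hn _ low hy yi); lia.
  exact: (trace_shift_a1_a3 low hy).
- case: j hij hj4 neq => [|[|[|[|//]]]] // _ _ _.
  by apply: (trace_next_order HH Ha Hn _ low hy yi); rewrite leq_addr.
- by case: j hij hj4 neq => [|[|[|[|//]]]].
Qed.

Lemma trace_eq_valuation_ideal : (exists z, T z /\ exists n, z n != 0) ->
  exists2 i, (i <= 4)%N & forall w, T w <-> I i w.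
Proof.
move=> nz; have [p [y [hy yp low]]] := trace_min_order nz.
have [i ap] := (Ha.2 p).1 (in_trace_inR hy yp).
have T_sub_I j w : (a j <= p)%N -> T w -> I j w.
  by move=> hj hw; split=> [|m hm]; [apply: in_trace_inR hw | apply: low hw _ (leq_trans hm hj)].
have I4_sub := conductor_sub_trace Ha Hn hy yp low.
case: (ltnP i 4) => hi4; last first.
  by exists 4%N => // w; split; [apply: T_sub_I; rewrite -ap (enum_leq Ha) | apply: I4_sub].
exists i; first exact: ltnW.
move=> w; split; first by apply: T_sub_I; rewrite ap.
rewrite -ap in yp low; apply: (I_sub_trace_down HH Ha I4_sub (ltnW hi4)).
by apply: (trace_exact_orders hi4 hy _ low); split=> //; apply: low.
Qed.
End Classification.

Section LineIdeals.
Variables (k : fieldType) (H : pred nat) (a : nat -> nat).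
Hypothesis HH : numerical_semigroup H.
Hypothesis Ha : enumerates H a.
Hypothesis Hn : conductor_index a 4.
Hypothesis hlt : (a 2 - a 1 < a 4 - a 3)%N.

Let a01 : (a 0 < a 1)%N. Proof. by rewrite (enum_ltn Ha). Qed.
Let a12 : (a 1 < a 2)%N. Proof. by rewrite (enum_ltn Ha). Qed.
Let a23 : (a 2 < a 3)%N. Proof. by rewrite (enum_ltn Ha). Qed.
Let a0E : a 0 = 0%N := enum0 HH Ha.

(* [a_2 - a_1 < a_4 - a_3 <= a_1], because [a_1 + a_3 > a_3] lies in [H]. *)
Let a21_gap : ~~ H (a 2 - a 1)%N.
Proof.
have : (a 4 <= a 1 + a 3)%N.
  by apply: (enum_next Ha); [case: HH => _ Hadd _; apply: Hadd; apply: (mem_enum Ha) | lia].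
by move=> a4_le; apply: (enum_gap Ha (i := 0)); lia.
Qed.

(* The ideal generated by [t^(a_1) + l t^(a_2)], [t^(a_3)] and the conductor. *)
Definition line_ideal_mem (l : k) (z : ps k) := [/\ inR H z, z 0%N = 0 & z (a 2) = l * z (a 1)].

Lemma line_ideal_order l x : line_ideal_mem l x -> order_ge (a 1) x.
Proof.
case=> hx x0 _ m hm; have [-> //|m0] := posnP m.
by apply: (inR_gap Ha (i := 0) hx); rewrite ?a0E.
Qed.

(* [(q x)_(a_1) = q_0 x_(a_1)] and [(q x)_(a_2) = q_0 x_(a_2) + q_(a_2 - a_1) x_(a_1)]. *)
Lemma line_ideal_mul l q x : q (a 2 - a 1)%N = 0 -> line_ideal_mem l x ->
  psmul q x 0%N = 0 /\ psmul q x (a 2) = l * psmul q x (a 1).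
Proof.
move=> qd hx; have low := line_ideal_order hx; case: hx => [hxR x0 xl]; split.
  by apply: (@psmul_order _ 0 (a 1)) => //; lia.
have e1 : psmul q x (a 1) = q 0%N * x (a 1).
  by rewrite (@psmul_coef1 _ _ _ _ 0) ?subn0 // => i hi hi0; rewrite low ?mulr0 //; lia.
have e2 : psmul q x (a 2) = q 0%N * x (a 2) + q (a 2 - a 1)%N * x (a 2 - (a 2 - a 1))%N.
  rewrite (@psmul_coef2 _ _ _ _ 0 (a 2 - a 1)%N) ?subn0 //; try lia.
  move=> i hi hi0 hid; case: (ltnP (a 2 - i) (a 1)) => h; first by rewrite low ?mulr0.
  rewrite (inR_gap Ha (i := 1) hxR) ?mulr0 //; last lia.
  by rewrite ltn_neqAle h andbT; apply/eqP => e; move/eqP: hid; lia.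
by rewrite e1 e2 qd mul0r addr0 xl mulrCA.
Qed.

Definition line_ideal (l : k) : ideal k H.
Proof.
refine (@Ideal k H (line_ideal_mem l) _ _ _ _ _).
- by split; [apply: inR_ps0 | | rewrite /ps0 mulr0].
- move=> x y [hx x0 xl] [hy y0 yl]; split; first exact: inR_psadd.
    by rewrite /psadd x0 y0 addr0.
  by rewrite /psadd xl yl mulrDr.
- move=> x [hx x0 xl]; split; first exact: inR_psopp.
    by rewrite /psopp x0 oppr0.
  by rewrite /psopp xl mulrN.
- move=> r x hr hx.
  have qd : r (a 2 - a 1)%N = 0 by apply/eqP; apply: contraNT a21_gap; apply: hr.
  have [m0 m2] := line_ideal_mul qd hx.
  by split => //; apply: inR_psmul => //; case: hx.
- by move=> x [].
Defined.

Lemma psX_line_ideal l m : m = a 3 \/ (a 4 <= m)%N -> line_ideal_mem l (psX k m).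
Proof.
move=> hm; have hm3 : (a 3 <= m)%N by case: hm => [->|]; lia.
split; last by rewrite /psX !ifF ?mulr0 //; apply/negbTE; lia.
  by apply: inR_psX; case: hm => [->|]; [apply: (mem_enum Ha) | apply: (mem_conductor Ha Hn)].
by rewrite /psX ifF //; apply/negbTE; lia.
Qed.

(* A multiplier [q] with [q t^(a_3)] in [R] has [q_(a_2 - a_1) = 0], as [a_3 + a_2 - a_1] is a gap:
   this is where the hypothesis [a_2 - a_1 < a_4 - a_3] is used. *)
Lemma line_ideal_in_T l : in_T H (line_ideal_mem l).
Proof.
apply: (@in_T_ideal k H (line_ideal l) HH (a 4)).
- by apply: (enum_gap Ha (i := 3)); have := conductor_jump Ha Hn; lia.
- by move=> m hm; apply: psX_line_ideal; right.
move=> q hq x hx.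
have qd : q (a 2 - a 1)%N = 0.
  have := hq _ (psX_line_ideal l (or_introl erefl)); rewrite psmulC psmul_X => h3.
  apply/eqP; apply: contraNT (enum_gap Ha (i := 3) (m := a 3 + (a 2 - a 1))%N _ _); try lia.
  by move=> hne; apply: h3; rewrite psshift_coef.
have [m0 m2] := line_ideal_mul qd hx.
by split => //; apply: hq.
Qed.

Definition line_gen (l : k) : ps k := psadd (psX k (a 1)) (psscale l (psX k (a 2))).

Lemma line_gen_in l m : line_ideal_mem m (line_gen l) <-> l = m.
Proof.
have n12 : (a 2 == a 1) = false by apply/negbTE; lia.
have n0 j : (0 < j)%N -> (0 == a j)%N = false.
  by move=> hj; apply/negbTE; rewrite eq_sym -lt0n -{1}a0E (enum_ltn Ha).
have gR : inR H (line_gen l).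
  move=> j; rewrite /line_gen /psadd /psscale /psX.
  case: (eqVneq j (a 1)) => [-> _|_]; first exact: (mem_enum Ha).
  case: (eqVneq j (a 2)) => [-> _|_]; first exact: (mem_enum Ha).
  by rewrite mulr0 addr0 eqxx.
rewrite /line_ideal_mem /line_gen /psadd /psscale /psX n12 (eq_sym (a 1)) n12 !eqxx !n0 //.
rewrite !mulr0 !addr0 add0r !mulr1.
by split=> [[] | <-].
Qed.

Lemma not_T_finite : infinite_field k -> ~ T_finite k H.
Proof.
move=> Hk [N [J hJ]].
have [s [hs us]] : exists s : seq k, size s = N.+1 /\ uniq s.
  elim: N.+1 => [|m [s [hs us]]]; first by exists [::].
  by have [x hx] := Hk s; exists (x :: s); rewrite /= hs hx us.
have spec (i : 'I_N.+1) : exists j : 'I_N, same_ideal (line_ideal_mem (nth 0 s i)) (J j).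
  by have [j [hj e]] := hJ _ (line_ideal_in_T (nth 0 s i)); exists (Ordinal hj).
pose phi i := projT1 (cid (spec i)).
suff /leq_card : injective phi by rewrite !card_ord ltnn.
move=> i i' e; have := projT2 (cid (spec i)); have := projT2 (cid (spec i')).
rewrite -/(phi i) -/(phi i') -e.
move=> hi' hi; apply/val_inj/eqP; rewrite -(nth_uniq 0 _ _ us) ?hs ?ltn_ord //.
by apply/eqP/(line_gen_in _ _).1; apply/hi'/hi/(line_gen_in _ _).2.
Qed.
End LineIdeals.

Lemma T_finite_of_T_eq_I (k : fieldType) (H : pred nat) (a : nat -> nat) n :
  T_eq_I k H a n -> T_finite k H.
Proof.
case=> hT _; exists n.+1, (@I_ideal k H a) => I /hT [i [hi e]].
by exists i; split; rewrite ?ltnS.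
Qed.

Lemma T_eq_I_of_le (k : fieldType) (H : pred nat) (a : nat -> nat) :
  numerical_semigroup H -> enumerates H a -> conductor_index a 4 ->
  (a 4 - a 3 <= a 2 - a 1)%N -> T_eq_I k H a 4.
Proof.
move=> HH Ha Hn hcond; split=> [I [[M [act [_ hI]]] [z [hz nz]]] | i hi].
  have [|i hi e] := trace_eq_valuation_ideal HH Ha Hn hcond (act := act).
    by exists z; split; [apply/hI | ].
  by exists i; split=> // w; rewrite hI e.
exact: (I_ideal_in_T k HH Ha Hn hi).
Qed.

Theorem corollary4p2 (k : fieldType) (Hk : infinite_field k)
  (H : pred nat) (HH : numerical_semigroup H)
  (a : nat -> nat) (Ha : enumerates H a) (Hn : conductor_index a 4) :
  [<-> T_finite k H; T_eq_I k H a 4; (a 4 - a 3 <= a 2 - a 1)%N].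
Proof.
have le_of_finite : T_finite k H -> (a 4 - a 3 <= a 2 - a 1)%N.
  by move=> fin; rewrite leqNgt; apply/negP => hlt; apply: (not_T_finite HH Ha Hn hlt Hk).
split; [|split].
- by move=> /le_of_finite /(T_eq_I_of_le k HH Ha Hn).
- by move=> /T_finite_of_T_eq_I /le_of_finite.
- by move=> /(T_eq_I_of_le k HH Ha Hn) /T_finite_of_T_eq_I.
Qed.
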